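(* Let $(E\to M,\rho,\langle\cdot,\cdot\rangle,\circ)$ be a Courant algebroid, $(\mathbf I,\mathbf J,\mathbf K)$ an almost hypercomplex structure on $E$, and let $\nabla$ be the hypercomplex connection $$\nabla_XY=-\tfrac12\mathbf K\big(\mathbf JY\circ\mathbf IX-\mathbf J(Y\circ\mathbf IX)-\mathbf I(\mathbf JY\circ X)+\mathbf J\mathbf I(Y\circ X)\big).$$ Then for all $X,Y\in\Gamma(E)$: (a) $\nabla_X\mathbf J=0$; (b) $(\nabla_X\mathbf I)Y=\tfrac12\mathbf K N_{\mathbf I,\mathbf J}(X,\mathbf IY)+\tfrac12\mathbf J N_{\mathbf I,\mathbf J}(X,Y)$; (c) $X\circ Y+\tfrac12\mathbf K N_{\mathbf I,\mathbf J}(X,Y)=\nabla_XY-\nabla_YX+D\langle X,Y\rangle-\big(\mathbf ID\langle X,\mathbf IY\rangle+\mathbf JD\langle X,\mathbf JY\rangle+\mathbf KD\langle X,\mathbf KY\rangle\big)$.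
   Context: A Courant algebroid $(E\to M,\rho,\langle\cdot,\cdot\rangle,\circ)$ consists of a real vector bundle $E\to M$ over a smooth manifold, a nondegenerate symmetric fiberwise bilinear pairing $\langle\cdot,\cdot\rangle$ on $E$, a vector bundle map $\rho:E\to TM$ (the anchor), and an $\mathbb R$-bilinear operation $\circ$ on $\Gamma(E)$ (the Dorfman bracket) such that for all $f\in C^\infty(M)$, $x,y,z\in\Gamma(E)$: $x\circ(y\circ z)=(x\circ y)\circ z+y\circ(x\circ z)$; $\rho(x\circ y)=[\rho(x),\rho(y)]$; $x\circ(fy)=(\rho(x)f)y+f(x\circ y)$; $x\circ y+y\circ x=2D\langle x,y\rangle$; $(Df)\circ x=0$; $\rho(x)\langle y,z\rangle=\langle x\circ y,z\rangle+\langle y,x\circ z\rangle$. Here $D:C^\infty(M)\to\Gamma(E)$ is the $\mathbb R$-linear map defined by $\langle Df,x\rangle=\tfrac12\rho(x)f$. For vector bundle endomorphisms $F,G$ of $E$ (over $\mathrm{id}_M$), the Nijenhuis concomitant is the tensor $N_{F,G}:E\otimes E\to E$ given by $N_{F,G}(X,Y)=FX\circ GY-F(X\circ GY)-G(FX\circ Y)+FG(X\circ Y)+GX\circ FY-G(X\circ FY)-F(GX\circ Y)+GF(X\circ Y)$. An almost hypercomplex structure on $E$ is a triple $(\mathbf I,\mathbf J,\mathbf K)$ of vector bundle endomorphisms of $E$ over $\mathrm{id}_M$, each orthogonal for $\langle\cdot,\cdot\rangle$, with $\mathbf I^2=\mathbf J^2=\mathbf K^2=\mathbf I\mathbf J\mathbf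 K=-1$. Given an almost hypercomplex structure, for $f\in C^\infty(M)$ and $X,Y\in\Gamma(E)$ set $\Delta_f(X,Y)=\langle X,Y\rangle Df+\langle\mathbf IX,Y\rangle\mathbf I Df+\langle\mathbf JX,Y\rangle\mathbf JDf+\langle\mathbf KX,Y\rangle\mathbf KDf$. A hypercomplex connection is an $\mathbb R$-bilinear map $\Gamma(E)\times\Gamma(E)\to\Gamma(E)$, $(X,Y)\mapsto\nabla_XY$, with $\nabla_{fX}Y=f\nabla_XY$ and $\nabla_X(fY)=(\rho(X)f)Y+f\nabla_XY-\Delta_f(X,Y)$. For an endomorphism $P$ of $E$, $(\nabla_XP)Y:=\nabla_X(PY)-P(\nabla_XY)$, and $\nabla_XP=0$ means this vanishes for all $Y$. *)

(* Algebraic model of a Courant algebroid: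
   R       : the scalar field (R = the reals in the paper; any numFieldType here),
   F       : the commutative R-algebra C^oo(M),
   V       : the F-module Gamma(E) of sections,
   rho     : V -> (F -> F)  the anchor, rho x acting on functions as a vector field,
   pair    : V -> V -> F    the pairing <.,.>,
   circ    : V -> V -> V    the Dorfman bracket,
   D       : F -> V         the map D with <Df,x> = 1/2 rho(x) f.
   Vector bundle endomorphisms over id_M are F-linear maps V -> V. *)
From HB Require Import structures.
From mathcomp Require Import all_boot all_order all_algebra.
Set Implicit Arguments. Unset Strict Implicit. Unset Printing Implicit Defensive.
Import Order.TTheory GRing.Theory Num.Theory.
Local Open Scope ring_scope.

Section Defs.
Variables (R : numFieldType) (F : comAlgType R) (V : lmodType F).

Definition fhalf : F := (2%:R^-1 : R)%:A.

Definition bundle_endo (P : V -> V) : Prop :=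
  forall (a : F) (x y : V), P (a *: x + y) = a *: P x + P y.

Definition is_courant_algebroid (rho : V -> F -> F) (pair : V -> V -> F)
    (circ : V -> V -> V) (D : F -> V) : Prop :=
  ((forall x y, pair x y = pair y x) /\
      (forall (a : F) x y z, pair (a *: x + y) z = a * pair x z + pair y z) /\
      (forall y, (forall x, pair x y = 0) -> y = 0)) /\
  ((
      forall (a : F) x y f, rho (a *: x + y) f = a * rho x f + rho y f) /\
      (forall x (c : R) f g, rho x (c *: f + g) = c *: rho x f + rho x g) /\
      (forall x f g, rho x (f * g) = rho x f * g + f * rho x g)) /\
  (
      (forall (c : R) x y z, circ (c%:A *: x + y) z = c%:A *: circ x z + circ y z) /\
      (forall (c : R) x y z, circ x (c%:A *: y + z) = c%:A *: circ x y + circ x z)) /\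
  ((forall x y z, circ x (circ y z) = circ (circ x y) z + circ y (circ x z)) /\
      (forall x y f, rho (circ x y) f = rho x (rho y f) - rho y (rho x f)) /\
      (forall x y (f : F), circ x (f *: y) = rho x f *: y + f *: circ x y) /\
      (forall x y, circ x y + circ y x = 2%:R *: D (pair x y)) /\
      (forall f x, circ (D f) x = 0) /\
      (forall x y z, rho x (pair y z) = pair (circ x y) z + pair y (circ x z))) /\
      (forall f x, pair (D f) x = fhalf * rho x f).

Definition almost_hypercomplex (pair : V -> V -> F) (I J K : V -> V) : Prop :=
  [/\ [/\ bundle_endo I, bundle_endo J & bundle_endo K],
      (forall x y, pair (I x) (I y) = pair x y),
      (forall x y, pair (J x) (J y) = pair x y),
      (forall x y, pair (K x) (K y) = pair x y) &
      [/\ (forall x, I (I x) = - x), (forall x, J (J x) = - x),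
          (forall x, K (K x) = - x) & (forall x, I (J (K x)) = - x)]].

Definition nijenhuis (circ : V -> V -> V) (P Q : V -> V) (X Y : V) : V :=
  circ (P X) (Q Y) - P (circ X (Q Y)) - Q (circ (P X) Y) + P (Q (circ X Y))
  + circ (Q X) (P Y) - Q (circ X (P Y)) - P (circ (Q X) Y) + Q (P (circ X Y)).

Definition hc_nabla (circ : V -> V -> V) (I J K : V -> V) (X Y : V) : V :=
  - (fhalf *: K (circ (J Y) (I X) - J (circ Y (I X)) - I (circ (J Y) X)
                + J (I (circ Y X)))).

Definition covd (nabla : V -> V -> V) (P : V -> V) (X Y : V) : V :=
  nabla X (P Y) - P (nabla X Y).

End Defs.

(* Write T_{P,Q}(X,Y) = PX o QY - P(X o QY) - Q(PX o Y) + PQ(X o Y) ('nhalf'),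
   so that N_{P,Q} = T_{P,Q} + T_{Q,P} and the connection of the theorem is
   nabla_X Y = -1/2 K T_{J,I}(Y,X).  The heart of the proof is the identity
       nabla_X Y = 1/2 K T_{I,J}(X,Y) + X o Y - Dcorr(X,Y),
       Dcorr(X,Y) = D<X,Y> - (I D<X,IY> + J D<X,JY> + K D<X,KY>),
   ('hc_nabla_formula').  It is obtained by swapping the arguments of every
   bracket in T_{J,I}(Y,X) with x o y + y o x = 2 D<x,y> ('nhalf_twist'): this
   yields -T_{I,J}(X,Y), the commutator term (IJ - JI)(X o Y) = 2K(X o Y), and
   D-terms which the quaternion relations and the orthogonality of I, J, K
   collapse to 2 K^-1 Dcorr(X,Y) ('Dcorr_twist').  Then (c) is this formula
   minus the definition of nabla_Y X; (b) follows from it together with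
   Dcorr(X,IY) = I Dcorr(X,Y) and a bracket identity for T_{J,I}; (a) follows
   from T_{J,I}(JY,X) = -J T_{J,I}(Y,X) and KJ = -JK. *)
From mathcomp Require Import all_boot all_order all_algebra.
Import GRing.Theory Num.Theory.
Local Open Scope ring_scope.
Set Implicit Arguments. Unset Strict Implicit. Unset Printing Implicit Defensive.

Section AdditiveMaps.
Variables (U W : zmodType) (f : U -> W).
Hypothesis fD : {morph f : x y / x + y}.

Lemma additive0 : f 0 = 0.
Proof. by apply: (addrI (f 0)); rewrite -fD !addr0. Qed.

Lemma additiveN x : f (- x) = - f x.
Proof. by apply/eqP; rewrite -addr_eq0 -fD addNr additive0. Qed.
End AdditiveMaps.

Section BundleEndomorphisms.
Variables (R : numFieldType) (F : comAlgType R) (V : lmodType F).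
Variable P : V -> V.
Hypothesis P_endo : bundle_endo P.

Lemma endoD x y : P (x + y) = P x + P y.
Proof. by have := P_endo 1 x y; rewrite !scale1r. Qed.

Lemma endoZ (a : F) x : P (a *: x) = a *: P x.
Proof. by have := P_endo a x 0; rewrite !addr0 (additive0 endoD) addr0. Qed.

Lemma endoN x : P (- x) = - P x.
Proof. exact: additiveN endoD x. Qed.
End BundleEndomorphisms.

Section Halving.
Variables (R : numFieldType) (F : comAlgType R) (V : lmodType F).

Lemma fhalf_twice (v : V) : @fhalf R F *: (2%:R *: v) = v.
Proof.
have half_twice : (2%:R^-1 : R) *+ 2 = 1.
  by rewrite -(mulr_natr (2%:R^-1 : R) 2) mulVf ?pnatr_eq0.
by rewrite scaler_nat -scalerMnr scalerMnl /fhalf scalerMnl half_twice !scale1r.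
Qed.
End Halving.

Section HalfNijenhuis.
Variables (R : numFieldType) (F : comAlgType R) (V : lmodType F).
Variable circ : V -> V -> V.

Definition nhalf (P Q : V -> V) (X Y : V) : V :=
  circ (P X) (Q Y) - P (circ X (Q Y)) - Q (circ (P X) Y) + P (Q (circ X Y)).

Lemma nijenhuisE P Q X Y :
  nijenhuis circ P Q X Y = nhalf P Q X Y + nhalf Q P X Y.
Proof. by rewrite /nijenhuis /nhalf !addrA. Qed.

Variables P Q : V -> V.
Hypotheses (P_endo : bundle_endo P) (Q_endo : bundle_endo Q).

(* Regrouping the terms of T_{Q,P}(Y,X) + T_{P,Q}(X,Y) into symmetrized
   brackets x o y + y o x; only additivity of P and Q is used. *)
Lemma nhalf_twist X Y :
  nhalf Q P Y X + nhalf P Q X Y + Q (P (circ X Y)) =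
    (circ (Q Y) (P X) + circ (P X) (Q Y)) - Q (circ Y (P X) + circ (P X) Y)
    - P (circ (Q Y) X + circ X (Q Y)) + Q (P (circ Y X + circ X Y))
    + P (Q (circ X Y)).
Proof.
rewrite /nhalf !(endoD P_endo, endoD Q_endo).
by rewrite !opprD !addrA (ACl (1*5*2*7*3*6*4*9*8)).
Qed.
End HalfNijenhuis.

Section BracketAdditivity.
Variables (R : numFieldType) (F : comAlgType R) (V : lmodType F).
Variable circ : V -> V -> V.
Hypothesis circ_linl :
  forall (c : R) x y z, circ (c%:A *: x + y) z = c%:A *: circ x z + circ y z.
Hypothesis circ_linr :
  forall (c : R) x y z, circ x (c%:A *: y + z) = c%:A *: circ x y + circ x z.

Lemma circDl x y z : circ (x + y) z = circ x z + circ y z.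
Proof. by have := circ_linl 1 x y z; rewrite scale1r !scale1r. Qed.

Lemma circDr x y z : circ x (y + z) = circ x y + circ x z.
Proof. by have := circ_linr 1 x y z; rewrite scale1r !scale1r. Qed.

Lemma circNl x z : circ (- x) z = - circ x z.
Proof. exact: (additiveN (fun x y => circDl x y z)). Qed.

Lemma circNr x z : circ z (- x) = - circ z x.
Proof. exact: (additiveN (circDr z)). Qed.
End BracketAdditivity.

Definition quaternionic (R : numFieldType) (F : comAlgType R) (V : lmodType F)
    (I J K : V -> V) : Prop :=
  [/\ [/\ bundle_endo I, bundle_endo J & bundle_endo K] &
      [/\ (forall x, I (I x) = - x), (forall x, J (J x) = - x),
          (forall x, K (K x) = - x) & (forall x, I (J (K x)) = - x)]].

Section Quaternions.
Variables (R : numFieldType) (F : comAlgType R) (V : lmodType F).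
Variables I J K : V -> V.
Hypothesis HQ : quaternionic I J K.

Let I_endo : bundle_endo I. Proof. by case: HQ => [[]]. Qed.
Let J_endo : bundle_endo J. Proof. by case: HQ => [[]]. Qed.
Let K_endo : bundle_endo K. Proof. by case: HQ => [[]]. Qed.
Let II x : I (I x) = - x. Proof. by case: HQ => _ []. Qed.
Let JJ x : J (J x) = - x. Proof. by case: HQ => _ []. Qed.
Let KK x : K (K x) = - x. Proof. by case: HQ => _ []. Qed.
Let IJK x : I (J (K x)) = - x. Proof. by case: HQ => _ []. Qed.

Lemma mulIJ x : I (J x) = K x.
Proof.
by apply: oppr_inj; rewrite -(IJK (K x)) KK (endoN J_endo) (endoN I_endo).
Qed.

Lemma mulJK x : J (K x) = I x.
Proof. by apply: oppr_inj; rewrite -(II (J (K x))) -(endoN I_endo) IJK. Qed.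

Lemma mulIK x : I (K x) = - J x.
Proof. by rewrite -mulIJ II. Qed.

Lemma mulJI x : J (I x) = - K x.
Proof. by rewrite -mulJK JJ. Qed.

Lemma mulKI x : K (I x) = J x.
Proof. by rewrite -mulIJ mulJI (endoN I_endo) mulIK opprK. Qed.

Lemma mulKJ x : K (J x) = - I x.
Proof. by rewrite -mulIJ JJ (endoN I_endo). Qed.

Variable circ : V -> V -> V.
Hypothesis circ_linl :
  forall (c : R) x y z, circ (c%:A *: x + y) z = c%:A *: circ x z + circ y z.
Hypothesis circ_linr :
  forall (c : R) x y z, circ x (c%:A *: y + z) = c%:A *: circ x y + circ x z.

Let expandE := (endoD I_endo, endoD J_endo, endoD K_endo,
  endoN I_endo, endoN J_endo, endoN K_endo,
  circDl circ_linl, circDr circ_linr, circNl circ_linl, circNr circ_linr,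
  II, JJ, KK, mulIJ, mulJK, mulIK, mulJI, mulKI, mulKJ, @opprK V).

Lemma nhalf_JI_J X Y : nhalf circ J I (J Y) X = - J (nhalf circ J I Y X).
Proof.
by rewrite /nhalf !expandE !opprD !opprK ?addrA (ACl (2*1*4*3)).
Qed.

(* The bracket part of (nabla_X I) Y, expressed through T_{J,I}. *)
Lemma nhalf_JI_I X Y :
  K (nhalf circ J I X (I Y)) + J (nhalf circ J I X Y) =
    2%:R *: (circ X (I Y) - I (circ X Y)).
Proof.
rewrite scaler_nat mulr2n /nhalf !expandE ?opprD ?opprK ?addrA.
by rewrite (@GRing.add V).[ACl ((3*5)*(1*7)*(4*2*6*8))] !addNr !add0r.
Qed.
End Quaternions.

Section HypercomplexCourant.
Variables (R : numFieldType) (F : comAlgType R) (V : lmodType F).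
Variables (rho : V -> F -> F) (pair : V -> V -> F) (circ : V -> V -> V).
Variables (D : F -> V) (I J K : V -> V).
Hypothesis HC : is_courant_algebroid rho pair circ D.
Hypothesis HH : almost_hypercomplex pair I J K.

Let HQ : quaternionic I J K.
Proof. by case: HH => endos _ _ _ rels; split. Qed.
Let I_endo : bundle_endo I. Proof. by case: HQ => [[]]. Qed.
Let J_endo : bundle_endo J. Proof. by case: HQ => [[]]. Qed.
Let K_endo : bundle_endo K. Proof. by case: HQ => [[]]. Qed.
Let II x : I (I x) = - x. Proof. by case: HQ => _ []. Qed.
Let JJ x : J (J x) = - x. Proof. by case: HQ => _ []. Qed.
Let KK x : K (K x) = - x. Proof. by case: HQ => _ []. Qed.
Let I_orth x y : pair (I x) (I y) = pair x y. Proof. by case: HH. Qed.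
Let J_orth x y : pair (J x) (J y) = pair x y. Proof. by case: HH. Qed.
Let K_orth x y : pair (K x) (K y) = pair x y. Proof. by case: HH. Qed.

Let circ_linl (c : R) x y z :
  circ (c%:A *: x + y) z = c%:A *: circ x z + circ y z.
Proof. by case: HC => _ [_ [[]]]. Qed.
Let circ_linr (c : R) x y z :
  circ x (c%:A *: y + z) = c%:A *: circ x y + circ x z.
Proof. by case: HC => _ [_ [[]]]. Qed.
Let circ_sym x y : circ x y + circ y x = 2%:R *: D (pair x y).
Proof. by case: HC => _ [_ [_ [[_ [_ [_ []]]]]]]. Qed.
Let pair_sym x y : pair x y = pair y x.
Proof. by case: HC => [[]]. Qed.
Let pair_lin (a : F) x y z : pair (a *: x + y) z = a * pair x z + pair y z.
Proof. by case: HC => [[_ [lin _]] _]. Qed.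
Let pair_nondeg y : (forall x, pair x y = 0) -> y = 0.
Proof. by case: HC => [[_ [_ nondeg]] _]; apply: nondeg. Qed.
Let rho_lin x (c : R) f g : rho x (c *: f + g) = c *: rho x f + rho x g.
Proof. by case: HC => _ [[_ []]]. Qed.
Let D_def f x : pair (D f) x = @fhalf R F * rho x f.
Proof. by case: HC => _ [_ [_ [_ ->]]]. Qed.

Let pairDl x y z : pair (x + y) z = pair x z + pair y z.
Proof. by rewrite -[x]scale1r pair_lin mul1r scale1r. Qed.
Let pairNl x z : pair (- x) z = - pair x z.
Proof. exact: (additiveN (fun x y => pairDl x y z)). Qed.
Let pairNr x z : pair z (- x) = - pair z x.
Proof. by rewrite pair_sym pairNl pair_sym. Qed.
Let rhoD x f g : rho x (f + g) = rho x f + rho x g.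
Proof. by rewrite -[f]scale1r rho_lin !scale1r. Qed.

Let quatE := (II, JJ, KK, mulIJ HQ, mulJK HQ, mulIK HQ, mulJI HQ, mulKI HQ,
  mulKJ HQ, @opprK V).
Let endoE := (endoD I_endo, endoD J_endo, endoD K_endo,
  endoN I_endo, endoN J_endo, endoN K_endo,
  endoZ I_endo, endoZ J_endo, endoZ K_endo).

Lemma pair_skewI x y : pair (I x) y = - pair x (I y).
Proof. by rewrite -I_orth II pairNl. Qed.
Lemma pair_skewJ x y : pair (J x) y = - pair x (J y).
Proof. by rewrite -J_orth JJ pairNl. Qed.
Lemma pair_skewK x y : pair (K x) y = - pair x (K y).
Proof. by rewrite -K_orth KK pairNl. Qed.

(* D is additive, by nondegeneracy of the pairing. *)
Lemma D_additive : {morph D : f g / f + g}.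
Proof.
move=> f g; apply/eqP; rewrite -subr_eq0; apply/eqP/pair_nondeg => x.
by rewrite pair_sym pairDl pairNl pairDl !D_def rhoD mulrDr subrr.
Qed.

Definition Dcorr X Y := D (pair X Y)
  - (I (D (pair X (I Y))) + J (D (pair X (J Y))) + K (D (pair X (K Y)))).

(* The D-terms produced by swapping the brackets of T_{J,I}(Y,X), after
   applying K, add up to Dcorr X Y. *)
Lemma Dcorr_twist X Y :
  K (D (pair (J Y) (I X)) - J (D (pair Y (I X))) - I (D (pair (J Y) X))
     + J (I (D (pair Y X)))) = Dcorr X Y.
Proof.
rewrite pair_skewJ (mulJI HQ) pairNr opprK (pair_sym Y (K X)) pair_skewK.
rewrite (pair_sym Y (I X)) pair_skewI (pair_sym (J Y) X) (pair_sym Y X).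
rewrite !(additiveN D_additive) /Dcorr !endoE !quatE ?opprD ?opprK ?addrA.
by rewrite (ACl (4*2*3*1)).
Qed.

Lemma Dcorr_I X Y : Dcorr X (I Y) = I (Dcorr X Y).
Proof.
rewrite /Dcorr !quatE !pairNr !(additiveN D_additive) !endoE !quatE.
by rewrite ?opprD ?opprK ?addrA (ACl (2*1*4*3)).
Qed.

Lemma nhalf_twist_JI X Y :
  K (nhalf circ J I Y X) + K (nhalf circ I J X Y) =
    2%:R *: (Dcorr X Y - circ X Y).
Proof.
have := congr1 K (nhalf_twist circ I_endo J_endo X Y).
rewrite !circ_sym -Dcorr_twist !endoE !quatE => /(canRL (addrK _)) ->.
by rewrite !scalerDr !scalerN opprK (scaler_nat 2 (circ X Y)) mulr2n opprD addrA.
Qed.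

Lemma hc_nabla_formula X Y :
  hc_nabla circ I J K X Y =
    @fhalf R F *: K (nhalf circ I J X Y) + circ X Y - Dcorr X Y.
Proof.
rewrite /hc_nabla -/(nhalf circ J I Y X) (canRL (addrK _) (nhalf_twist_JI X Y)).
by rewrite (scalerBr (@fhalf R F)) fhalf_twice opprB (opprB (Dcorr X Y)) addrA.
Qed.

Lemma hc_nabla_J X Y : covd (hc_nabla circ I J K) J X Y = 0.
Proof.
rewrite /covd /hc_nabla -/(nhalf circ J I (J Y) X) -/(nhalf circ J I Y X).
rewrite (nhalf_JI_J HQ circ_linl); move: (nhalf circ J I Y X) => A.
by rewrite !endoE !quatE addNr.
Qed.

Lemma hc_nabla_I X Y :
  covd (hc_nabla circ I J K) I X Y =
    @fhalf R F *: K (nijenhuis circ I J X (I Y))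
    + @fhalf R F *: J (nijenhuis circ I J X Y).
Proof.
have bracket_defect : circ X (I Y) =
    @fhalf R F *: K (nhalf circ J I X (I Y))
    + @fhalf R F *: J (nhalf circ J I X Y) + I (circ X Y).
  by rewrite -scalerDr (nhalf_JI_I HQ circ_linr) fhalf_twice subrK.
rewrite /covd !hc_nabla_formula Dcorr_I !nijenhuisE bracket_defect.
(* What remains is linear algebra in the halves, kept as opaque vectors. *)
move: (nhalf circ I J X (I Y)) (nhalf circ J I X (I Y)) => T1 T1'.
move: (nhalf circ I J X Y) (nhalf circ J I X Y) => T2 T2'.
move: (Dcorr X Y) (circ X Y) => E c.
rewrite !endoE !quatE !scalerN !scalerDr !opprD !opprK !addrA.
by rewrite (@GRing.add V).[ACl ((1*2*6*3)*((4*7)*(5*8)))] subrr addNr !addr0.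
Qed.

Lemma circ_nijenhuis X Y :
  circ X Y + @fhalf R F *: K (nijenhuis circ I J X Y) =
    hc_nabla circ I J K X Y - hc_nabla circ I J K Y X + D (pair X Y)
    - (I (D (pair X (I Y))) + J (D (pair X (J Y))) + K (D (pair X (K Y)))).
Proof.
rewrite hc_nabla_formula [hc_nabla _ _ _ _ Y X]/hc_nabla.
rewrite -/(nhalf circ J I X Y) -[RHS]addrA -/(Dcorr X Y) nijenhuisE.
move: (nhalf circ I J X Y) (nhalf circ J I X Y) (Dcorr X Y) (circ X Y).
move=> T T' E c.
rewrite (endoD K_endo) scalerDr opprK.
by rewrite [RHS](@GRing.add V).[ACl ((2*(1*4))*(3*5))] addNr addr0.
Qed.

End HypercomplexCourant.

Theorem mainTheorem4 (R : numFieldType) (F : comAlgType R) (V : lmodType F)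
    (rho : V -> F -> F) (pair : V -> V -> F) (circ : V -> V -> V) (D : F -> V)
    (I J K : V -> V) :
  is_courant_algebroid rho pair circ D ->
  almost_hypercomplex pair I J K ->
  forall X Y : V,
  [/\ covd (hc_nabla circ I J K) J X Y = 0,
      covd (hc_nabla circ I J K) I X Y =
        @fhalf R F *: K (nijenhuis circ I J X (I Y)) + @fhalf R F *: J (nijenhuis circ I J X Y) &
      circ X Y + @fhalf R F *: K (nijenhuis circ I J X Y) =
        hc_nabla circ I J K X Y - hc_nabla circ I J K Y X + D (pair X Y)
        - (I (D (pair X (I Y))) + J (D (pair X (J Y))) + K (D (pair X (K Y))))].
Proof.
move=> HC HH X Y; split.
- exact: hc_nabla_J HC HH X Y.
- exact: hc_nabla_I HC HH X Y.
- exact: circ_nijenhuis HC HH X Y.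
Qed.
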